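(* Let $\mathbb{K}$ be a field, let $S\subseteq\mathbb{K}$ be a finite set with $0\in S$ and $|S|\ge k+1$, and let $f\in\mathbb{K}[x_1,\ldots,x_n]$ have total degree at most $k$. Then $f\equiv 0$ if and only if $f(a)=0$ for all $a\in W^k_n(S)$.
   Context: $W^k_n(S)$ denotes the set of vectors $a\in S^n$ having at most $k$ nonzero coordinates (Hamming weight at most $k$). *)

From HB Require Import structures.
From mathcomp Require Import all_boot all_order all_algebra.
Set Implicit Arguments. Unset Strict Implicit. Unset Printing Implicit Defensive.
Import Order.TTheory GRing.Theory Num.Theory.
Local Open Scope ring_scope.

Definition monom (n : nat) := n.-tuple nat.

Record mpoly (K : fieldType) (n : nat) := MPoly {
  mcoeff : monom n -> K ;
  msupp : seq (monom n) ;
  msuppP : forall m, mcoeff m != 0 -> m \in msupp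
}.

Definition mdegm (n : nat) (m : monom n) : nat := (\sum_(i < n) tnth m i)%N.

Definition mdeg_le (K : fieldType) (n : nat) (f : mpoly K n) (k : nat) : Prop :=
  forall m, mcoeff f m != 0 -> (mdegm m <= k)%N.

Definition mpoly_zero (K : fieldType) (n : nat) (f : mpoly K n) : Prop :=
  forall m, mcoeff f m = 0.

Definition meval_monom (K : fieldType) (n : nat) (m : monom n) (a : n.-tuple K) : K :=
  \prod_(i < n) tnth a i ^+ tnth m i.

Definition meval (K : fieldType) (n : nat) (f : mpoly K n) (a : n.-tuple K) : K :=
  \sum_(m <- undup (msupp f)) mcoeff f m * meval_monom m a.

Definition hweight (K : fieldType) (n : nat) (a : n.-tuple K) : nat :=
  count (fun x => x != 0) a.

(* a \in W^k_n(S) : all coordinates in S and Hamming weight at most k *)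
Definition inW (K : fieldType) (n k : nat) (S : seq K) (a : n.-tuple K) : Prop :=
  (forall i : 'I_n, tnth a i \in S) /\ (hweight a <= k)%N.

(* If f is nonzero, pick a monomial x^m0 of f and set to 0 every variable not
   occurring in it.  The points so obtained from S^n have weight at most
   deg x^m0 <= k, and the surviving part of f is a nonzero polynomial in which
   every variable has degree <= k < |S|.  Such a polynomial cannot vanish on the
   whole grid S^n, by induction on n from the univariate bound on roots. *)
From HB Require Import structures.
From mathcomp Require Import all_boot all_order all_algebra.
Import Order.TTheory GRing.Theory Num.Theory.
Local Open Scope ring_scope.

Lemma tnth_le_mdegm {n} (m : monom n) i : (tnth m i <= mdegm m)%N.
Proof. by rewrite /mdegm (bigD1 i) //= leq_addr. Qed.

Lemma coef_eq0_of_roots {K : fieldType} {S : seq K} (b : nat -> K) :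
  uniq S -> (forall x, x \in S -> \sum_(e < size S) b e * x ^+ e = 0) ->
  forall e, (e < size S)%N -> b e = 0.
Proof.
move=> uS Sroots e lt_e.
have p0 : \poly_(i < size S) b i = 0.
  apply/eqP; apply: contraT => p_neq0.
  have rootsS : all (root (\poly_(i < size S) b i)) S.
    by apply/allP => x xS; rewrite /root horner_poly Sroots.
  by have := max_poly_roots p_neq0 rootsS uS; rewrite ltnNge size_poly.
by have := coef_poly (size S) b e; rewrite p0 coef0 lt_e.
Qed.

Section Grid.

Context {K : fieldType}.

Definition exps_lt {n} (N : nat) (L : seq (monom n)) : Prop :=
  forall m, m \in L -> forall i, (tnth m i < N)%N.

Lemma meval_monom_cons {n} (x : K) (a : n.-tuple K) (m : monom n.+1) :
  meval_monom m [tuple of x :: a] =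
  x ^+ thead m * meval_monom [tuple of behead m] a.
Proof.
rewrite /meval_monom big_ord_recl; congr (_ * _).
by apply: eq_bigr => i _; rewrite tnthS [in LHS](tuple_eta m) tnthS.
Qed.

Definition slice {n} (L : seq (monom n.+1)) (e : nat) : seq (monom n) :=
  [seq behead_tuple t | t <- L & thead t == e].

Lemma slice_uniq {n} (L : seq (monom n.+1)) e : uniq L -> uniq (slice L e).
Proof.
move=> uL; rewrite map_inj_in_uniq ?filter_uniq // => t1 t2.
rewrite !mem_filter => /andP[/eqP h1 _] /andP[/eqP h2 _] /(congr1 val) /= eq12.
by apply: val_inj; rewrite (tuple_eta t1) (tuple_eta t2) /= h1 h2 eq12.
Qed.

Lemma slice_exps_lt {n N} (L : seq (monom n.+1)) e :
  exps_lt N L -> exps_lt N (slice L e).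
Proof.
move=> ltL m' /mapP[t]; rewrite mem_filter => /andP[_ tL] -> i.
by rewrite tnth_behead ltL.
Qed.

Lemma mem_slice {n} (L : seq (monom n.+1)) m :
  m \in L -> behead_tuple m \in slice L (thead m).
Proof. by move=> mL; apply: map_f; rewrite mem_filter eqxx. Qed.

Lemma sum_meval_monom_cons {n N} (L : seq (monom n.+1)) (c : monom n.+1 -> K)
    (x : K) (a : n.-tuple K) :
  (forall t, t \in L -> thead t < N)%N ->
  \sum_(t <- L) c t * meval_monom t [tuple of x :: a] =
  \sum_(e < N) (\sum_(m <- slice L e) c [tuple of (e : nat) :: m] * meval_monom m a)
                 * x ^+ e.
Proof.
move=> ltL.
under [RHS]eq_bigr do rewrite big_map big_filter big_distrl big_mkcond.
rewrite exchange_big /=; apply: eq_big_seq => t tL.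
rewrite (bigD1 (Ordinal (ltL t tL))) //= eqxx big1 ?addr0; last first.
  by move=> e /eqP ne; case: eqP => // he; case: ne; apply: val_inj.
rewrite meval_monom_cons -tuple_eta mulrAC -mulrA.
by congr (_ * (_ * meval_monom _ _)); apply: val_inj.
Qed.

Lemma coef_eq0_of_grid_roots {S : seq K} {n} {L : seq (monom n)}
    {c : monom n -> K} :
  uniq S -> uniq L -> exps_lt (size S) L ->
  (forall a : n.-tuple K, (forall i, tnth a i \in S) ->
     \sum_(m <- L) c m * meval_monom m a = 0) ->
  forall m, m \in L -> c m = 0.
Proof.
move=> uS; elim: n L c => [|n IHn] L c uL ltL Lroots m mL.
  have := Lroots [tuple] ltac:(by case).
  rewrite (bigD1_seq m mL uL) /= big1 ?addr0.
    by rewrite /meval_monom big_ord0 mulr1.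
  by move=> m' /negP[]; rewrite (tuple0 m') (tuple0 m).
have lthead t : t \in L -> (thead t < size S)%N by move/ltL; apply.
have slice_roots e : (e < size S)%N -> forall a : n.-tuple K,
    (forall i, tnth a i \in S) ->
    \sum_(m' <- slice L e) c [tuple of e :: m'] * meval_monom m' a = 0.
  move=> lt_e a aS; move: e lt_e; apply: coef_eq0_of_roots uS _ => x xS.
  rewrite -sum_meval_monom_cons //; apply: Lroots => i.
  by case: (unliftP ord0 i) => [j ->|->]; rewrite ?tnthS ?tnth0.
rewrite (tuple_eta m).
apply: (IHn (slice L (thead m)) (fun m' => c [tuple of thead m :: m'])).
- exact: slice_uniq.
- exact: slice_exps_lt.
- exact/slice_roots/lthead.
- exact: mem_slice.
Qed.

End Grid.

Section Restriction.

Context {K : fieldType} {n : nat}.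

Definition supp_sub (m m0 : monom n) : bool :=
  [forall i, (tnth m0 i == 0%N) ==> (tnth m i == 0%N)].

Lemma supp_sub_refl m : supp_sub m m.
Proof. by apply/forallP => i; apply/implyP. Qed.

Definition zero_off (m0 : monom n) (a : n.-tuple K) : n.-tuple K :=
  [tuple if tnth m0 i == 0%N then 0 else tnth a i | i < n].

Lemma zero_off_mem (S : seq K) m0 a : 0 \in S ->
  (forall i, tnth a i \in S) -> forall i, tnth (zero_off m0 a) i \in S.
Proof. by move=> S0 aS i; rewrite tnth_mktuple; case: ifP. Qed.

Lemma hweight_zero_off m0 a : (hweight (zero_off m0 a) <= mdegm m0)%N.
Proof.
rewrite /hweight -sum1_count big_mkcond big_tuple /mdegm.
apply: leq_sum => i _; rewrite tnth_mktuple.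
case: (tnth m0 i =P 0%N) => [-> | /eqP m0i]; first by rewrite eqxx.
by case: ifP; rewrite // lt0n.
Qed.

Lemma meval_monom_zero_off m0 m a :
  meval_monom m (zero_off m0 a) =
  if supp_sub m m0 then meval_monom m a else 0.
Proof.
case: ifP => [/forallP sub_m | /negbT/forallPn[i]].
  apply: eq_bigr => i _; rewrite tnth_mktuple; case: eqP => // m0i.
  by move/implyP: (sub_m i); rewrite m0i eqxx => /(_ isT)/eqP ->; rewrite !expr0.
rewrite negb_imply => /andP[/eqP m0i mi].
by rewrite /meval_monom (bigD1 i) //= tnth_mktuple m0i eqxx expr0n (negbTE mi) mul0r.
Qed.

Lemma meval_zero_off (f : mpoly K n) m0 a :
  meval f (zero_off m0 a) =
  \sum_(m <- undup (msupp f) | (mcoeff f m != 0) && supp_sub m m0)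
     mcoeff f m * meval_monom m a.
Proof.
rewrite /meval (bigID (fun m => (mcoeff f m != 0) && supp_sub m m0)) /=.
rewrite [X in _ + X]big1 ?addr0 => [|m].
  by apply: eq_bigr => m /andP[_ sub_m]; rewrite meval_monom_zero_off sub_m.
rewrite meval_monom_zero_off negb_and negbK => /orP[/eqP -> | /negbTE ->].
  by rewrite mul0r.
by rewrite mulr0.
Qed.

End Restriction.

Theorem lemma4 (K : fieldType) (n k : nat) (S : seq K) (f : mpoly K n) :
  uniq S -> 0 \in S -> (k.+1 <= size S)%N -> mdeg_le f k ->
  (mpoly_zero f <-> (forall a : n.-tuple K, inW k S a -> meval f a = 0)).
Proof.
move=> uS S0 lt_k_S degf; split.
  by move=> f0 a _; rewrite /meval big1 // => m _; rewrite f0 mul0r.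
move=> Wroots m0; have [// | fm0] := eqVneq (mcoeff f m0) 0.
pose L := [seq m <- undup (msupp f) | (mcoeff f m != 0) && supp_sub m m0].
have m0L : m0 \in L.
  by rewrite mem_filter fm0 supp_sub_refl mem_undup msuppP.
have ltL : exps_lt (size S) L.
  move=> m; rewrite mem_filter => /andP[/andP[fm _] _] i.
  exact: leq_ltn_trans (leq_trans (tnth_le_mdegm m i) (degf m fm)) lt_k_S.
have Lroots a : (forall i, tnth a i \in S) ->
    \sum_(m <- L) mcoeff f m * meval_monom m a = 0.
  move=> aS; rewrite big_filter -meval_zero_off; apply: Wroots; split.
    exact: zero_off_mem.
  exact: leq_trans (hweight_zero_off m0 a) (degf m0 fm0).
exact: coef_eq0_of_grid_roots uS (filter_uniq _ (undup_uniq _)) ltL Lroots _ m0L.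
Qed.
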